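(* Let $S$ be a $1$-synchronizable system. Let $\tau\in T_0(S)$ and $m_1,\dots,m_n\in\Sigma_M$ be such that $\tau\cdot !m_1\cdots !m_n\in T_n(S)$. Then $\tau\cdot !?m_1\cdots !?m_n\in T_0(S)$.
   Context: A message set $M=(\Sigma_M,N,\mathrm{src},\mathrm{dst})$: finite set of messages, $N\ge1$ peers, $\mathrm{src}(a)\neq\mathrm{dst}(a)\in\{1,\dots,N\}$. Actions $!a$ (by peer $\mathrm{src}(a)$), $?a$ (by peer $\mathrm{dst}(a)$); traces are finite action sequences; $!?a$ abbreviates $!a\cdot?a$. For a trace $\tau$, $\pi_!(\tau)$ is the sequence of sent messages; $\mathrm{buf}_{i\to j}(\tau)$ is the word $w$ (if any) with (sent on $i\to j$) $=$ (received on $i\to j$)$\cdot w$. $\tau$ is FIFO ($k$-bounded FIFO) if for all $i,j$ and prefixes $\tau'$, $\mathrm{buf}_{i\to j}(\tau')$ is defined (and has length $\le k$); synchronous if of the form $!?a_1\cdots!?a_k$. A system $S=(P_1,\dots,P_N)$: finite automata $P_i$ (all states accepting) over actions of peer $i$, with one FIFO channel per ordered pair $i\neq j$. A configuration: one control state per peer and contents $w_{i,j}$ of channels; stable if all channels empty. $!a$ ($\mathrm{src}(a)=i,\mathrm{dst}(a)=j$) moves $P_i$ and appends $a$ to $w_{i,j}$; $?a$ moves $P_j$ and removes $a$ from the head of $w_{i,j}$; $c_0$ is the initial configuration. $T_k(S)$ ($k\ge1$): $k$-bounded FIFO traces $\tau$ with $c_0\xrightarrow{\tau}c$ for some $c$;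 $T_0(S)$: synchronous such traces; $T_\omega(S)=\bigcup_kT_k(S)$. $ST_k(S)=\{\pi_!(\tau)\mid\tau\in T_k(S)\}\cup\{(\pi_!(\tau),c)\mid c_0\xrightarrow{\tau}c,\ c\text{ stable},\ \tau\in T_k(S)\}$; $S$ is $1$-synchronizable if $ST_0(S)=ST_1(S)$. *)

From mathcomp Require Import all_boot.
Set Implicit Arguments. Unset Strict Implicit. Unset Printing Implicit Defensive.

Section Systems.

(* Message set M = (Msg, N, src, dst); peers are 'I_N (= {1..N} shifted). *)
Variables (N : nat) (Msg : finType) (src dst : Msg -> 'I_N).

Inductive action := Send of Msg | Recv of Msg.

Definition actor (x : action) : 'I_N :=
  match x with Send a => src a | Recv a => dst a end.

Definition trace := seq action.

Definition sends (t : trace) : seq Msg :=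
  pmap (fun x => if x is Send a then Some a else None) t.

Definition sent_on (i j : 'I_N) (t : trace) : seq Msg :=
  [seq a <- sends t | (src a == i) && (dst a == j)].
Definition recv_on (i j : 'I_N) (t : trace) : seq Msg :=
  [seq a <- pmap (fun x => if x is Recv a then Some a else None) t
     | (src a == i) && (dst a == j)].

(* buf_{i->j}(t) = Some w  iff  sent = received ++ w *)
Definition buf_def (i j : 'I_N) (t : trace) (w : seq Msg) : Prop :=
  sent_on i j t = recv_on i j t ++ w.

Definition kfifo (k : nat) (t : trace) : Prop :=
  forall (n : nat) (i j : 'I_N),
    exists w, buf_def i j (take n t) w /\ size w <= k.

Definition synch_of (ms : seq Msg) : trace :=
  flatten [seq [:: Send a; Recv a] | a <- ms].
Definition synchronous (t : trace) : Prop := exists ms, t = synch_of ms.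

(* A system: one finite automaton per peer (all states accepting).
   Transitions are only ever consulted on actions of the peer itself. *)
Record system := System {
  state : 'I_N -> finType;
  init : forall i, state i;
  trans : forall i, state i -> action -> state i -> bool
}.

Record config (S : system) := Config {
  ctrl : forall i, state S i;
  chan : 'I_N -> 'I_N -> seq Msg
}.

Definition c0 (S : system) : config S := Config (init S) (fun _ _ => [::]).

Definition stable (S : system) (c : config S) : Prop :=
  forall i j, chan c i j = [::].

Definition step (S : system) (c : config S) (x : action) (c' : config S) : Prop :=
  [/\ trans (ctrl c (actor x)) x (ctrl c' (actor x)),
      (forall k, k != actor x -> ctrl c' k = ctrl c k),
      (forall i j, (i, j) != (src (match x with Send a | Recv a => a end),
                              dst (match x with Send a | Recv a => a end)) ->
                   chan c' i j = chan c i j) &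
      match x with
      | Send a => chan c' (src a) (dst a) = rcons (chan c (src a) (dst a)) a
      | Recv a => chan c (src a) (dst a) = a :: chan c' (src a) (dst a)
      end].

Inductive reach (S : system) : config S -> trace -> config S -> Prop :=
  | reach_nil c : reach c [::] c
  | reach_cons c x c' t c'' : step c x c' -> reach c' t c'' -> reach c (x :: t) c''.

Definition Tk (S : system) (k : nat) (t : trace) : Prop :=
  (if k is 0 then synchronous t else kfifo k t) /\ exists c, reach (c0 S) t c.

Inductive obs (S : system) :=
  | ObsW of seq Msg
  | ObsC of seq Msg & config S.

Definition STk (S : system) (k : nat) (o : obs S) : Prop :=
  match o with
  | ObsW w => exists t, Tk S k t /\ sends t = w
  | ObsC w c => exists t, [/\ Tk S k t, sends t = w, reach (c0 S) t c & stable c]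
  end.

Definition one_synchronizable (S : system) : Prop :=
  forall o : obs S, STk 0 o <-> STk 1 o.

End Systems.

From mathcomp Require Import all_boot.
Set Implicit Arguments. Unset Strict Implicit. Unset Printing Implicit Defensive.

(* Executability is checked locally: a trace can be executed as soon as each
   peer's projection is a run of its automaton and each channel is used in FIFO
   order, and every executed trace has accepted projections.  So it suffices
   that every peer accepts its projection of tau.!?m1...!?mn.  Induct on n and
   let y = mn, sent by P.  If P receives none of m1..m(n-1), the trace
   tau.!?m1...!?m(n-1).!y is 1-bounded and executable, and 1-synchronizability
   yields a synchronous execution with the same sends, namely tau.!?m1...!?mn.
   Otherwise let x be the last of them received by P: postponing ?x after !y
   again gives a 1-bounded executable trace; the run of P on it comes from the
   induction hypothesis for the shorter sequence where x and the later messages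
   not sent by P are dropped. *)

Section Traces.
Variables (N : nat) (Msg : finType) (src dst : Msg -> 'I_N).

Local Notation act := (action Msg).
Local Notation actor := (actor src dst).

Definition msg_of (x : act) : Msg := match x with Send a | Recv a => a end.

Definition on_chan (i j : 'I_N) (a : Msg) := (src a == i) && (dst a == j).

Definition peer_proj (i : 'I_N) (t : seq act) := [seq x <- t | actor x == i].

Definition chan_proj (i j : 'I_N) (t : seq act) :=
  [seq x <- t | on_chan i j (msg_of x)].

Definition recvs (t : seq act) : seq Msg :=
  pmap (fun x => if x is Recv a then Some a else None) t.

Lemma sends_cat (u v : seq act) : sends (u ++ v) = sends u ++ sends v.
Proof. exact: pmap_cat. Qed.

Lemma sends_synch (ms : seq Msg) : sends (synch_of ms) = ms.
Proof. by elim: ms => //= a ms IH; rewrite /sends /= -/(sends _) IH. Qed.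

Lemma synch_cat (ms ms' : seq Msg) :
  synch_of (ms ++ ms') = synch_of ms ++ synch_of ms'.
Proof. by rewrite /synch_of map_cat flatten_cat. Qed.

Lemma peer_proj_cat i (u v : seq act) :
  peer_proj i (u ++ v) = peer_proj i u ++ peer_proj i v.
Proof. exact: filter_cat. Qed.

Lemma chan_proj_cat i j (u v : seq act) :
  chan_proj i j (u ++ v) = chan_proj i j u ++ chan_proj i j v.
Proof. exact: filter_cat. Qed.

Lemma peer_proj_sends i (ms : seq Msg) :
  peer_proj i (map (@Send Msg) ms) = map (@Send Msg) [seq a <- ms | src a == i].
Proof. by elim: ms => //= a ms IH; rewrite /peer_proj /= -/(peer_proj _ _) IH; case: ifP. Qed.

Lemma peer_proj_synch_sends i (ms : seq Msg) : all (fun a => dst a != i) ms ->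
  peer_proj i (synch_of ms) = map (@Send Msg) [seq a <- ms | src a == i].
Proof.
elim: ms => //= a ms IH /andP[a_i ms_i].
by rewrite /peer_proj /= (negbTE a_i) -/(peer_proj _ _) IH //; case: ifP.
Qed.

Lemma chan_proj_synch i j (ms : seq Msg) :
  chan_proj i j (synch_of ms) = synch_of [seq a <- ms | on_chan i j a].
Proof.
elim: ms => //= a ms IH; rewrite /chan_proj /= -/(chan_proj _ _ _) IH.
by case: ifP => /= ->.
Qed.

Lemma sent_onE i j t : sent_on src dst i j t = sends (chan_proj i j t).
Proof.
rewrite /sent_on /chan_proj /on_chan.
elim: t => [|[a|a] t IH] //=; last by case: ifP.
by rewrite /sends /= -/(sends _); case: ifP; rewrite //= IH.
Qed.

Lemma recv_onE i j t : recv_on src dst i j t = recvs (chan_proj i j t).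
Proof.
rewrite /recv_on /chan_proj /on_chan.
elim: t => [|[a|a] t IH] //=; first by case: ifP.
by rewrite /recvs /= -/(recvs _); case: ifP; rewrite //= IH.
Qed.

Lemma split_last_has (T : Type) (p : pred T) (s : seq T) : has p s ->
  exists s1 x s2, [/\ s = s1 ++ x :: s2, p x & ~~ has p s2].
Proof.
elim/last_ind: s => // s y IH; rewrite has_rcons.
have [py _|npy /= /IH[s1 [x [s2 [-> px nps2]]]]] := boolP (p y).
  by exists s, y, [::]; rewrite cats1.
by exists s1, x, (rcons s2 y); rewrite rcons_cat has_rcons negb_or npy.
Qed.

Lemma filter_take_exists (T : Type) (p : pred T) (s : seq T) n :
  exists m, [seq x <- take n s | p x] = take m [seq x <- s | p x].
Proof.
elim: s n => [|x s IH] [|n] /=; try by exists 0; rewrite ?take0.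
have [m ->] := IH n; case: (p x); last by exists m.
by exists m.+1.
Qed.

Fixpoint alternating (u : seq act) : bool :=
  match u with
  | [::] => true
  | [:: Send _] => true
  | Send a :: Recv b :: u' => (a == b) && alternating u'
  | _ => false
  end.

Lemma alternating_ind (P : seq act -> Prop) :
  P [::] -> (forall a, P [:: Send a]) ->
  (forall a u, alternating u -> P u -> P (Send a :: Recv a :: u)) ->
  forall u, alternating u -> P u.
Proof.
move=> P0 P1 P2 u; have [n] := ubnP (size u); elim: n u => // n IH.
case=> [|[a|a] [|[b|b] u]] //= lt_u /andP[/eqP <- alt_u].
by apply: P2 => //; apply: IH (ltnW lt_u) alt_u.
Qed.

Lemma alternating_synch_cat (ms : seq Msg) u :
  alternating (synch_of ms ++ u) = alternating u.
Proof. by elim: ms => //= a ms IH; rewrite eqxx. Qed.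

Lemma alternating_synch (ms : seq Msg) : alternating (synch_of ms).
Proof. by rewrite -[synch_of ms]cats0 alternating_synch_cat. Qed.

Lemma alternating_take n u : alternating u -> alternating (take n u).
Proof.
move=> alt_u; move: u alt_u n.
apply: alternating_ind => [|a|a u _ IH] [|[|n]] //=.
by rewrite eqxx IH.
Qed.

Lemma alternating_buf u : alternating u ->
  exists2 w, sends u = recvs u ++ w & size w <= 1.
Proof.
move: u; apply: alternating_ind => [|a|a u _ [w e_u le_w]]; first by exists [::].
  by exists [:: a].
by exists w; rewrite // /sends /recvs /= -/(sends u) -/(recvs u) e_u.
Qed.

Lemma kfifo1_alternating t :
  (forall i j, alternating (chan_proj i j t)) -> kfifo src dst 1 t.
Proof.
move=> alt_t n i j.
have [m e_m] := filter_take_exists (fun x => on_chan i j (msg_of x)) t n.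
have [w e_w le_w] := alternating_buf (alternating_take m (alt_t i j)).
by exists w; rewrite /buf_def sent_onE recv_onE /chan_proj e_m.
Qed.

Fixpoint fifo_ok (q : seq Msg) (u : seq act) : Prop :=
  match u with
  | [::] => True
  | Send a :: u' => fifo_ok (rcons q a) u'
  | Recv a :: u' => if q is b :: q' then a = b /\ fifo_ok q' u' else False
  end.

Lemma alternating_fifo_ok u : alternating u -> fifo_ok [::] u.
Proof. by move: u; apply: alternating_ind. Qed.

End Traces.

Section Runs.
Variables (N : nat) (Msg : finType) (src dst : Msg -> 'I_N) (S : system N Msg).

Local Notation act := (action Msg).
Local Notation actor := (actor src dst).
Local Notation peer_proj := (peer_proj src dst).
Local Notation chan_proj := (chan_proj src dst).
Local Notation on_chan := (on_chan src dst).

Inductive peer_run (i : 'I_N) : state S i -> seq act -> state S i -> Prop :=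
  | peer_run_nil s : peer_run s [::] s
  | peer_run_cons s x s' w s'' :
      trans s x s' -> peer_run s' w s'' -> peer_run s (x :: w) s''.

Definition accepts (i : 'I_N) (w : seq act) := exists s, peer_run (init S i) w s.

Definition peers_accept (t : seq act) := forall i, accepts i (peer_proj i t).

Lemma peer_run_consE i (s s'' : state S i) x w :
  peer_run s (x :: w) s'' -> exists2 s', trans s x s' & peer_run s' w s''.
Proof.
move=> r; move e: (x :: w) r => xw r.
by case: r e => // s0 y s' w' s2 tr r [-> ->]; exists s'.
Qed.

Lemma peer_run_catE i (s s'' : state S i) u v :
  peer_run s (u ++ v) s'' -> exists2 s', peer_run s u s' & peer_run s' v s''.
Proof.
elim: u s => [|x u IH] s /=; first by exists s => //; constructor.
case/peer_run_consE=> s1 tr /IH[s2 r1 r2].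
by exists s2 => //; apply: peer_run_cons tr r1.
Qed.

Lemma accepts_prefix i u v : accepts i (u ++ v) -> accepts i u.
Proof. by case=> s /peer_run_catE[s' r _]; exists s'. Qed.

Lemma peers_accept_prefix u v : peers_accept (u ++ v) -> peers_accept u.
Proof.
by move=> acc i; apply: (accepts_prefix (v := peer_proj i v)); rewrite -peer_proj_cat.
Qed.

Lemma reach_peer_run c t c' : reach src dst c t c' ->
  forall i, peer_run (ctrl c i) (peer_proj i t) (ctrl c' i).
Proof.
elim=> [c1|c1 x c2 t' c3 [tr ctrl_x _ _] _ IH] i; first by constructor.
rewrite /peer_proj /=; case: eqP => [<-|ne_x]; first exact: peer_run_cons tr (IH _).
by rewrite -ctrl_x ?IH //; apply/eqP => e; apply: ne_x; rewrite e.
Qed.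

Lemma reach_peers_accept t c : reach src dst (c0 S) t c -> peers_accept t.
Proof. by move=> r i; exists (ctrl c i); apply: reach_peer_run r i. Qed.

Definition chan_step (ch : 'I_N -> 'I_N -> seq Msg) (x : act) i j :=
  if on_chan i j (msg_of x) then
    (if x is Send a then rcons (ch i j) a else behead (ch i j))
  else ch i j.

Lemma chan_step_out ch x i j :
  (i, j) != (src (msg_of x), dst (msg_of x)) -> chan_step ch x i j = ch i j.
Proof. by rewrite /chan_step /on_chan; case: ifP => // /andP[/eqP-> /eqP->]; rewrite eqxx. Qed.

Lemma chan_step_in ch x t :
  let i := src (msg_of x) in let j := dst (msg_of x) in
  fifo_ok (ch i j) (chan_proj i j (x :: t)) ->
  match x with
  | Send a => chan_step ch x (src a) (dst a) = rcons (ch (src a) (dst a)) a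
  | Recv a => ch (src a) (dst a) = a :: chan_step ch x (src a) (dst a)
  end.
Proof.
rewrite /chan_proj /chan_step /on_chan; case: x => a /=; rewrite !eqxx //=.
by case: (ch (src a) (dst a)) => // b q [-> _].
Qed.

Lemma chan_step_fifo_ok ch x t i j :
  fifo_ok (ch i j) (chan_proj i j (x :: t)) ->
  fifo_ok (chan_step ch x i j) (chan_proj i j t).
Proof.
rewrite /chan_proj /chan_step /=; case: ifP => // _; case: x => a //=.
by case: (ch i j) => // b q [_ ?].
Qed.

Lemma reach_of_fifo_runs t (c : config S) :
  (forall i j, fifo_ok (chan c i j) (chan_proj i j t)) ->
  (forall i, exists s, peer_run (ctrl c i) (peer_proj i t) s) ->
  exists c', reach src dst c t c'.
Proof.
elim: t c => [|x t IH] c fifo_t run_t; first by exists c; constructor.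
have [s1 tr run_x] : exists2 s1, trans (ctrl c (actor x)) x s1 &
    exists s, peer_run s1 (peer_proj (actor x) t) s.
  have [s] := run_t (actor x); rewrite /peer_proj /= eqxx.
  by case/peer_run_consE=> s1 tr r; exists s1 => //; exists s.
pose c' := Config (dfwith (ctrl c) s1) (chan_step (chan c) x).
have step_x : step src dst c x c'.
  split=> [|k|i j|]; rewrite /c' /= ?dfwith_in //.
  - by rewrite eq_sym => ne_k; rewrite dfwith_out.
  - exact: chan_step_out.
  - exact: chan_step_in (fifo_t _ _).
have [c'' r] : exists c'', reach src dst c' t c''.
  apply: IH => [i j|i]; first exact: chan_step_fifo_ok.
  rewrite /c' /=; case: dfwithP => // k ne_k.
  by have [s] := run_t k; rewrite /peer_proj /= (negbTE ne_k); exists s.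
by exists c''; apply: reach_cons step_x r.
Qed.

Lemma reach_of_alternating t :
  (forall i j, alternating (chan_proj i j t)) -> peers_accept t ->
  exists c, reach src dst (c0 S) t c.
Proof.
move=> alt_t acc_t; apply: reach_of_fifo_runs => [i j|]; first exact: alternating_fifo_ok.
exact: acc_t.
Qed.

Lemma reach_synch ms : peers_accept (synch_of ms) ->
  exists c, reach src dst (c0 S) (synch_of ms) c.
Proof.
by apply: reach_of_alternating => i j; rewrite chan_proj_synch alternating_synch.
Qed.

End Runs.

Section Synchronizability.
Variables (N : nat) (Msg : finType) (src dst : Msg -> 'I_N) (S : system N Msg).
Hypothesis src_neq_dst : forall a, src a != dst a.
Hypothesis sync1 : one_synchronizable src dst S.

Local Notation Send := (@Send Msg).
Local Notation peer_proj := (peer_proj src dst).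
Local Notation chan_proj := (chan_proj src dst).
Local Notation accepts := (accepts S).
Local Notation peers_accept := (peers_accept src dst S).

Lemma peer_proj_synch_sender i (ms : seq Msg) : all (fun a => src a == i) ms ->
  peer_proj i (synch_of ms) = map Send ms.
Proof.
move=> src_i; rewrite peer_proj_synch_sends; first by move/all_filterP: src_i => ->.
by apply/allP => a /(allP src_i)/eqP <-; rewrite eq_sym src_neq_dst.
Qed.

Lemma peers_accept_synch_sends t :
  (forall i j, alternating (chan_proj i j t)) -> peers_accept t ->
  peers_accept (synch_of (sends t)).
Proof.
move=> alt_t acc_t; have [c r] := reach_of_alternating alt_t acc_t.
have : STk src dst 1 (ObsW S (sends t)).
  by exists t; split=> //; split; [exact: kfifo1_alternating | exists c].
case/sync1=> _ [[[ms ->] [c' r']]]; rewrite sends_synch => <-.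
exact: reach_peers_accept r'.
Qed.

Lemma peers_accept_synch_rcons ms y :
  peers_accept (synch_of ms) ->
  accepts (src y) (peer_proj (src y) (synch_of ms) ++ [:: Send y]) ->
  peers_accept (synch_of (rcons ms y)).
Proof.
move=> acc acc_y; rewrite -cats1.
have := @peers_accept_synch_sends (synch_of ms ++ [:: Send y]).
rewrite sends_cat sends_synch /=; apply=> [i j|i].
  by rewrite chan_proj_cat chan_proj_synch alternating_synch_cat /=; case: ifP.
rewrite peer_proj_cat /=; case: eqP => [<- //|_].
by rewrite cats0; apply: acc.
Qed.

(* The witness postpones ?x after !y, which keeps every channel 1-bounded
   because dst x receives nothing in between. *)
Lemma peers_accept_synch_delayed ms x ms' y :
  src y = dst x -> all (fun a => dst a != dst x) ms' ->
  peers_accept (synch_of (ms ++ x :: ms')) ->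
  accepts (dst x) (peer_proj (dst x) (synch_of (ms ++ ms')) ++ [:: Send y]) ->
  peers_accept (synch_of (ms ++ x :: rcons ms' y)).
Proof.
move=> y_x no_recv acc acc_y; rewrite -cats1.
have := @peers_accept_synch_sends (synch_of ms ++ Send x :: synch_of ms' ++ [:: Send y]).
rewrite sends_cat sends_synch /sends /= -/(sends _) sends_cat sends_synch.
apply=> [i j|i].
  rewrite chan_proj_cat chan_proj_synch alternating_synch_cat -cat1s !chan_proj_cat /=.
  rewrite chan_proj_synch; case: ifP => [/andP[/eqP<- /eqP<-]|_] /=.
    rewrite (@eq_in_filter _ _ pred0) ?filter_pred0 /on_chan => [|a /(allP no_recv)/negbTE->].
      by rewrite y_x eq_sym (negbTE (src_neq_dst x)).
    by rewrite andbF.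
  by rewrite alternating_synch_cat; case: ifP.
case: (eqVneq (dst x) i) => [<-|ne_i].
  move: acc_y; rewrite synch_cat !peer_proj_cat /= (negbTE (src_neq_dst x)).
  by rewrite peer_proj_cat /= y_x eqxx catA.
have drop_recv : peer_proj i [:: Send x; Recv x] = peer_proj i [:: Send x].
  by rewrite /peer_proj /= (negbTE ne_i).
have drop_y : peer_proj i [:: Send y] = [::] by rewrite /peer_proj /= y_x (negbTE ne_i).
rewrite -(cat1s (Send x)); move: (acc i).
rewrite synch_cat -[synch_of (x :: ms')]/([:: Send x; Recv x] ++ synch_of ms').
by rewrite !peer_proj_cat drop_recv drop_y cats0.
Qed.

Lemma peers_accept_sends_drop u ms x ms' P : src x != P ->
  peers_accept (u ++ map Send (ms ++ x :: ms')) ->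
  peers_accept (u ++ map Send (ms ++ [seq a <- ms' | src a == P])).
Proof.
move=> x_P acc i; move: (acc i).
rewrite !peer_proj_cat !peer_proj_sends !filter_cat /= !map_cat.
have [->|ne_i] := eqVneq i P; first by rewrite (negbTE x_P) filter_id.
have -> : [seq a <- [seq a <- ms' | src a == P] | src a == i] = [::].
  rewrite -filter_predI -(filter_pred0 ms'); apply: eq_filter => a /=.
  by case: eqP => // ->; rewrite (negbTE ne_i).
by rewrite cats0 catA => /accepts_prefix.
Qed.

Lemma peers_accept_sends_synch ms ms' :
  peers_accept (synch_of ms ++ map Send ms') -> peers_accept (synch_of (ms ++ ms')).
Proof.
have [n] := ubnP (size ms'); elim: n ms' => // n IH ms'.
case/lastP: ms' => [_|ms' y]; first by rewrite !cats0.
rewrite size_rcons ltnS => lt_ms' acc; set P := src y.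
have acc_ms' : peers_accept (synch_of (ms ++ ms')).
  apply: (IH _ lt_ms'); apply: (peers_accept_prefix (v := map Send [:: y])).
  by rewrite -catA -map_cat cats1.
have [no_recv|] := boolP (all (fun a => dst a != P) ms').
  rewrite -rcons_cat; apply: peers_accept_synch_rcons acc_ms' _.
  move: (acc P); rewrite peer_proj_cat peer_proj_sends filter_rcons eqxx map_rcons -cats1.
  by rewrite synch_cat peer_proj_cat [peer_proj _ (synch_of ms')]peer_proj_synch_sends -?catA.
rewrite -has_predC => /split_last_has[ms1 [x [ms2 [e_ms' /negPn/eqP dst_x]]]].
rewrite has_predC negbK => no_recv; subst ms'.
have src_x : src x != P by rewrite -dst_x src_neq_dst.
rewrite rcons_cat /= in acc *.
have acc_J : peers_accept (synch_of (ms ++ ms1 ++ [seq a <- rcons ms2 y | src a == P])).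
  apply: (IH _ _ (peers_accept_sends_drop src_x acc)); apply: leq_ltn_trans lt_ms'.
  by rewrite !size_cat /= size_filter leq_add2l -(size_rcons _ y) count_size.
have acc_y : accepts P (peer_proj P (synch_of (ms ++ ms1 ++ ms2)) ++ [:: Send y]).
  move: (acc_J P); rewrite !synch_cat !peer_proj_cat.
  rewrite [peer_proj _ (synch_of (filter _ _))]peer_proj_synch_sender ?filter_all //.
  rewrite filter_rcons eqxx map_rcons -cats1.
  by rewrite [peer_proj _ (synch_of ms2)]peer_proj_synch_sends // -!catA.
rewrite catA; apply: peers_accept_synch_delayed; rewrite ?dst_x -?catA //.
Qed.

End Synchronizability.

Theorem lemma4p7 (N : nat) (Msg : finType) (src dst : Msg -> 'I_N)
    (hN : 0 < N) (hsd : forall a, src a != dst a)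
    (S : system N Msg) (tau : trace Msg) (ms : seq Msg) :
  one_synchronizable src dst S ->
  Tk src dst S 0 tau ->
  Tk src dst S (size ms) (tau ++ map (@Send Msg) ms) ->
  Tk src dst S 0 (tau ++ synch_of ms).
Proof.
move=> sync1 [[ms0 ->] _] [_ [c r]].
have acc := peers_accept_sends_synch hsd sync1 (reach_peers_accept r).
split; first by exists (ms0 ++ ms); rewrite synch_cat.
by rewrite -synch_cat; apply: reach_synch.
Qed.
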